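(* Let two players have arbitrary (not necessarily identical) valuations $v_1,v_2$ on a finite set of goods $M$. Let $(A_1,A_2)$ be a leximin++ solution for two players who both have valuation $v_1$. - If $v_2(A_1)\ge v_2(A_2)$, give $A_2$ to player 1 and $A_1$ to player 2. - Otherwise, give $A_1$ to player 1 and $A_2$ to player 2. The resulting allocation is EFX with respect to $(v_1,v_2)$.
   Context: A valuation is a function $v:2^M\to\mathbb{R}_{\ge0}$ with $v(\emptyset)=0$ that is monotone: $v(S)\le v(T)$ whenever $S\subseteq T$. An allocation is an ordered partition $(A_1,\dots,A_n)$ of $M$; parts may be empty. It is EFX if for all players $i,j$ and every $g\in A_j$ we have $v_i(A_i)\ge v_i(A_j\setminus\{g\})$. For an allocation $A$, let $X^A$ be the ordering of the players by increasing utility $v_i(A_i)$, with ties broken by increasing player index. The leximin++ comparison is defined as follows. For allocations $A$ and $B$, scan $\ell=1,\dots,n$, and let $i=X^A_\ell$ and $j=X^B_\ell$. - If $v_i(A_i)\ne v_j(B_j)$, stop: $A\prec_{++}B$ holds if and only if $v_i(A_i)<v_j(B_j)$. - Otherwise, if $|A_i|\ne|B_j|$, stop: $A\prec_{++}B$ holds if and only if $|A_i|<|B_j|$. - Otherwise continue to $\ell+1$. If the scan finishes without stopping, then $A\prec_{++}B$ is false. A leximin++ solution is an allocation $A$ that is maximal for this comparison: there is no allocation $B$ with $A\prec_{++}B$. *)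

From HB Require Import structures.
From mathcomp Require Import all_boot all_order all_algebra.
Set Implicit Arguments. Unset Strict Implicit. Unset Printing Implicit Defensive.
Import Order.TTheory GRing.Theory Num.Theory.
Local Open Scope ring_scope.

Section Defs.
Variables (R : realFieldType) (M : finType).

Definition is_valuation (v : {set M} -> R) : Prop :=
  [/\ v set0 = 0, (forall S, 0 <= v S) &
      (forall S T : {set M}, S \subset T -> v S <= v T)].

Definition is_allocation (n : nat) (A : 'I_n -> {set M}) : Prop :=
  (forall i j, i != j -> [disjoint A i & A j]) /\
  (\bigcup_(i < n) A i = [set: M]).

Definition EFX (n : nat) (v : 'I_n -> {set M} -> R) (A : 'I_n -> {set M}) : Prop :=
  forall i j : 'I_n, forall g, g \in A j -> v i (A j :\ g) <= v i (A i).

Definition player_le (n : nat) (v : 'I_n -> {set M} -> R) (A : 'I_n -> {set M})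
  (i j : 'I_n) : bool :=
  (v i (A i) < v j (A j)) || ((v i (A i) == v j (A j)) && (i <= j)%N).

Definition X_order (n : nat) (v : 'I_n -> {set M} -> R) (A : 'I_n -> {set M}) :
  seq 'I_n := sort (player_le v A) (enum 'I_n).

Definition lex_keys (n : nat) (v : 'I_n -> {set M} -> R) (A : 'I_n -> {set M}) :
  seq (R * nat) := [seq (v i (A i), #|A i|) | i <- X_order v A].

Fixpoint lex_lt (s t : seq (R * nat)) : bool :=
  match s, t with
  | a :: s', b :: t' =>
      if a.1 != b.1 then a.1 < b.1
      else if a.2 != b.2 then (a.2 < b.2)%N
      else lex_lt s' t'
  | _, _ => false
  end.

Definition leximinpp_lt (n : nat) (v : 'I_n -> {set M} -> R)
  (A B : 'I_n -> {set M}) : bool := lex_lt (lex_keys v A) (lex_keys v B).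

Definition leximinpp_solution (n : nat) (v : 'I_n -> {set M} -> R)
  (A : 'I_n -> {set M}) : Prop :=
  is_allocation A /\ forall B, is_allocation B -> ~~ leximinpp_lt v A B.

End Defs.

(* two-player valuation profile: player 1 = ord0, player 2 = ord1 *)
Definition profile2 (R : realFieldType) (M : finType) (v1 v2 : {set M} -> R)
  : 'I_2 -> {set M} -> R := fun i => if i == ord0 then v1 else v2.

Definition alloc2 (M : finType) (S1 S2 : {set M}) : 'I_2 -> {set M} :=
  fun i => if i == ord0 then S1 else S2.

(* Moving a good g from the richer bundle Y to the poorer bundle X when
   v X < v (Y :\ g) raises the minimum value, or keeps it and enlarges the
   minimum bundle; either way the allocation improves for leximin++.  Hence a
   leximin++ solution (A1, A2) for the common valuation v1 is EFX in both
   directions for v1, so player 1 is content with either bundle, and player 2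
   is given the bundle that v2 prefers. *)
From HB Require Import structures.
From mathcomp Require Import all_boot all_order all_algebra.
Set Implicit Arguments. Unset Strict Implicit. Unset Printing Implicit Defensive.
Import Order.TTheory GRing.Theory Num.Theory.
Local Open Scope ring_scope.

Section TwoBundles.
Variables (R : realFieldType) (M : finType).
Implicit Types (v : {set M} -> R) (X Y : {set M}).

Lemma enum_ord2 : enum 'I_2 = [:: ord0; ord_max].
Proof. by apply: (inj_map val_inj); rewrite val_enum_ord. Qed.

Lemma is_allocation2 X Y :
  is_allocation (alloc2 X Y) <-> [disjoint X & Y] /\ X :|: Y = setT.
Proof.
rewrite /is_allocation big_ord_recl big_ord1; split=> [[dis ->]|[dXY ->]].
  by split=> //; apply: (dis ord0 ord_max).
split=> // -[[|[|//]] ?] [[|[|//]] ?] //= _.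
by rewrite /alloc2 /= disjoint_sym.
Qed.

Lemma is_allocation2C X Y :
  is_allocation (alloc2 X Y) -> is_allocation (alloc2 Y X).
Proof.
by move/is_allocation2=> [dXY uXY]; apply/is_allocation2; rewrite disjoint_sym setUC.
Qed.

Lemma is_allocation2_transfer X Y g : g \in Y ->
  is_allocation (alloc2 X Y) -> is_allocation (alloc2 (g |: X) (Y :\ g)).
Proof.
move=> gY /is_allocation2[dXY uXY]; apply/is_allocation2; split.
  rewrite disjoints_subset subUset sub1set !inE eqxx /=.
  by apply: subset_trans (_ : ~: Y \subset _); rewrite ?setCS ?subsetDl -?disjoints_subset.
by rewrite setUAC setD1K // setUC.
Qed.

Lemma lex_keys2 v X Y :
  lex_keys (profile2 v v) (alloc2 X Y) =
  if v X <= v Y then [:: (v X, #|X|); (v Y, #|Y|)]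
  else [:: (v Y, #|Y|); (v X, #|X|)].
Proof.
rewrite /lex_keys /X_order enum_ord2 /sort /= /player_le /profile2 /alloc2 /=.
by rewrite andbT orbC -le_eqVlt; case: ifP.
Qed.

(* With equal values the tie is broken by player index, so swapping the
   bundles can then change the keys. *)
Lemma lex_keys2C v X Y : v X != v Y ->
  lex_keys (profile2 v v) (alloc2 X Y) = lex_keys (profile2 v v) (alloc2 Y X).
Proof.
rewrite !lex_keys2 => neXY.
by case: (ltgtP (v X) (v Y)) neXY => //= [/ltW -> | /ltW ->]; rewrite ?lt_geF.
Qed.

Lemma leximinpp_solution2C v X Y : v X != v Y ->
  leximinpp_solution (profile2 v v) (alloc2 X Y) ->
  leximinpp_solution (profile2 v v) (alloc2 Y X).
Proof.
move=> neXY [allocXY maxXY]; split; first exact: is_allocation2C.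
by move=> B; rewrite /leximinpp_lt -lex_keys2C //; apply: maxXY.
Qed.

Lemma leximinpp_lt2_transfer v X Y g :
  is_valuation v -> g \in Y -> g \notin X -> v X < v (Y :\ g) ->
  leximinpp_lt (profile2 v v) (alloc2 X Y) (alloc2 (g |: X) (Y :\ g)).
Proof.
case=> _ _ mono gY gX ltXYg.
have leX : v X <= v (g |: X) by apply/mono/subsetUr.
have ltXY : v X < v Y by apply: lt_le_trans ltXYg (mono _ _ (subsetDl _ _)).
have cardX : #|g |: X| = #|X|.+1 by rewrite cardsU1 gX.
rewrite /leximinpp_lt !lex_keys2 (ltW ltXY) /= cardX.
case: ifP => _ /=; rewrite ?(lt_eqF ltXYg) ?ltXYg //.
case: eqVneq => [_|neX] /=; last by rewrite lt_neqAle neX leX.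
by rewrite ltnSn (ltn_eqF (ltnSn _)).
Qed.

Lemma leximinpp_solution2_EFX v X Y g :
  is_valuation v -> leximinpp_solution (profile2 v v) (alloc2 X Y) ->
  g \in Y -> v (Y :\ g) <= v X.
Proof.
move=> hv [allocXY maxXY] gY; rewrite leNgt; apply/negP => lt.
have gX : g \notin X.
  by apply: contraTN gY => gX; move: allocXY => /is_allocation2[/disjointFr->].
move: (leximinpp_lt2_transfer hv gY gX lt).
by apply/negP/maxXY/is_allocation2_transfer.
Qed.

Lemma leximinpp_solution2_EFXC v X Y g :
  is_valuation v -> leximinpp_solution (profile2 v v) (alloc2 X Y) ->
  g \in X -> v (X :\ g) <= v Y.
Proof.
move=> hv sol gX; rewrite leNgt; apply/negP => lt.
have [_ _ mono] := hv.
have ltYX : v Y < v X by apply: lt_le_trans lt (mono _ _ (subsetDl _ _)).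
have solYX := leximinpp_solution2C (negbT (gt_eqF ltYX)) sol.
by move: (leximinpp_solution2_EFX hv solYX gX); rewrite leNgt lt.
Qed.

Lemma EFX2 (u w : {set M} -> R) X Y :
  is_valuation u -> is_valuation w ->
  (forall g, g \in Y -> u (Y :\ g) <= u X) ->
  (forall g, g \in X -> w (X :\ g) <= w Y) ->
  EFX (profile2 u w) (alloc2 X Y).
Proof.
move=> [_ _ monou] [_ _ monow] efxu efxw.
move=> [[|[|//]] ?] [[|[|//]] ?] g; rewrite /profile2 /alloc2 /= => hg.
- exact/monou/subsetDl.
- exact: efxu.
- exact: efxw.
- exact/monow/subsetDl.
Qed.

End TwoBundles.

Theorem theorem4p3 (R : realFieldType) (M : finType) (v1 v2 : {set M} -> R)
  (A1 A2 : {set M}) :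
  is_valuation v1 -> is_valuation v2 ->
  leximinpp_solution (profile2 v1 v1) (alloc2 A1 A2) ->
  EFX (profile2 v1 v2)
    (if v2 A2 <= v2 A1 then alloc2 A2 A1 else alloc2 A1 A2).
Proof.
move=> hv1 hv2 sol; have [_ _ mono2] := hv2.
have v2D (S : {set M}) g : v2 (S :\ g) <= v2 S by apply/mono2/subsetDl.
case: ifP => pref2; apply: EFX2 => // g hg.
- exact: leximinpp_solution2_EFXC sol hg.
- exact: le_trans (v2D _ _) pref2.
- exact: leximinpp_solution2_EFX sol hg.
- by apply: le_trans (v2D _ _) _; rewrite ltW // ltNge pref2.
Qed.
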